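(* Let $m$ be a positive integer and $u,v\in[m]^*$. Then $u\backsim_{[m]}v$ if and only if there exists a rearrangement map $f:\mathbb{P}^*\to\mathbb{P}^*$ that witnesses the Wilf equivalence $u\backsim v$.
   Context: $\mathbb{P}^*$ is the set of finite words over the positive integers (usual order), and $[m]^*\subseteq\mathbb{P}^*$ the words over $[m]=\{1,\ldots,m\}$. For words $u,w$, $u\le w$ (generalized factor order) if there are $|u|$ consecutive letters of $w$ whose $i$-th letter is $\ge$ the $i$-th letter of $u$ for each $i$; $\mathcal{F}(u)=\{w\in\mathbb{P}^*:u\le w\}$. With $\mathrm{wt}(w)=t^{n}x^{\sum_i w_i}$ for $w=w_1\ldots w_n$ and $F(u;t,x)=\sum_{w\in\mathcal{F}(u)}\mathrm{wt}(w)$, $u\backsim v$ iff $F(u;t,x)=F(v;t,x)$. For $w\in[m]^*$ let $c_i(w)$ be the number of occurrences of $i$ in $w$ and $W_{[m]}(w)=\prod_{i=1}^m x_i^{c_i(w)}$; $F(u;x_1,\ldots,x_m)=\sum_{w\in\mathcal{F}(u)\cap[m]^*}W_{[m]}(w)$, and $u\backsim_{[m]}v$ iff $F(u;x_1,\ldots,x_m)=F(v;x_1,\ldots,x_m)$. A rearrangement map witnessing $u\backsim v$ is a weight-preserving bijection $f:\mathbb{P}^*\to\mathbb{P}^*$ such that $f(w)$ is a rearrangement (permutation of the letters) of $w$ for every $w$, and $w\in\mathcal{F}(u)\iff f(w)\in\mathcal{F}(v)$. *)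

(* Words over the positive integers are represented as
   [seq nat] whose letters are all positive. *)
From mathcomp Require Import all_boot.
Set Implicit Arguments. Unset Strict Implicit. Unset Printing Implicit Defensive.

Definition posword (w : seq nat) : bool := all (fun a => 0 < a) w.

Definition mword (m : nat) (w : seq nat) : bool := all (fun a => 0 < a <= m) w.

Definition gfo (u w : seq nat) : bool :=
  (size u <= size w) &&
  has (fun i => all (fun j => nth 0 u j <= nth 0 w (i + j)) (iota 0 (size u)))
      (iota 0 (size w - size u).+1).

(* weight wt(w) = t^{|w|} x^{sum w}, recorded by the pair (|w|, sum w) *)
Definition wt (w : seq nat) : nat * nat := (size w, sumn w).

(* Coefficient of the monomial W_[m](w0) = prod x_i^{c_i(w0)} in
   F(u; x_1, ..., x_m): the words of [m]^* with the same content as w0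
   are exactly the distinct rearrangements of w0, listed without
   duplicates by [permutations w0]. *)
Definition coefF (u w0 : seq nat) : nat :=
  count (gfo u) (permutations w0).

(* u ~_[m] v : F(u; x_1..x_m) = F(v; x_1..x_m), i.e. all coefficients agree. *)
Definition mwilf (m : nat) (u v : seq nat) : Prop :=
  forall w0, mword m w0 -> coefF u w0 = coefF v w0.

Definition rearrangement_map (u v : seq nat) (f : seq nat -> seq nat) : Prop :=
  (forall w, posword w -> posword (f w)) /\
  {in posword &, injective f} /\
  (forall w', posword w' -> exists2 w, posword w & f w = w') /\
  (forall w, posword w -> wt (f w) = wt w) /\
  (forall w, posword w -> perm_eq (f w) w) /\
  (forall w, posword w -> (gfo u w <-> gfo v (f w))).

From mathcomp Require Import all_boot.
Set Implicit Arguments. Unset Strict Implicit. Unset Printing Implicit Defensive.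

(* Both sides amount to: for every positive word s, the rearrangements of s
   containing u are as many as those containing v.  Since the letters of u
   and v are at most m, containing u only depends on the word truncated at m;
   the rearrangements of s are in bijection with pairs (rearrangement of the
   truncated word, arrangement of the letters >= m), so these counts are
   multiples of the coefficients of F(u; x_1, ..., x_m) with a factor
   independent of u.  A rearrangement map then matches, inside each
   rearrangement class, the words containing u with those containing v; and
   conversely any rearrangement map permutes each (finite) class. *)

Section Transfer.
Variables (T : eqType) (x0 : T) (s t : seq T).

Definition transfer x := nth x0 t (index x s).

Hypothesis size_st : size s = size t.

Lemma mem_transfer x : x \in s -> transfer x \in t.
Proof. by move=> xs; rewrite mem_nth // -size_st index_mem. Qed.

Lemma transfer_inj : uniq t -> {in s &, injective transfer}.
Proof.
move=> t_uniq x y xs ys /eqP; rewrite /transfer nth_uniq -?size_st ?index_mem //.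
by move=> /eqP eq_index; rewrite -(nth_index x0 xs) eq_index nth_index.
Qed.

Lemma transfer_onto : uniq s -> forall y, y \in t -> exists2 x, x \in s & transfer x = y.
Proof.
move=> s_uniq y yt; exists (nth x0 s (index y t)); first by rewrite mem_nth ?size_st ?index_mem.
by rewrite /transfer index_uniq ?size_st ?index_mem ?nth_index.
Qed.
End Transfer.

Section MatchPred.
Variables (T : eqType) (x0 : T) (X : seq T) (p q : pred T).

Definition match_pred x :=
  if p x then transfer x0 (filter p X) (filter q X) x
  else transfer x0 (filter (predC p) X) (filter (predC q) X) x.

Hypothesis count_pq : count p X = count q X.

Lemma count_predC_eq : count (predC p) X = count (predC q) X.
Proof. by apply/eqP; rewrite -(eqn_add2l (count p X)) {2}count_pq !count_predC. Qed.

Lemma match_predP x : x \in X -> match_pred x \in X /\ q (match_pred x) = p x.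
Proof.
have mem_filterT a b : count a X = count b X -> a x -> x \in X ->
    transfer x0 (filter a X) (filter b X) x \in filter b X.
  by move=> eq_ab ax xX; apply: mem_transfer; rewrite ?size_filter ?mem_filter ?ax.
rewrite /match_pred; case px: (p x) => xX.
  by have := mem_filterT _ _ count_pq px xX; rewrite mem_filter => /andP[-> ->].
have := mem_filterT _ _ count_predC_eq (negbT px) xX.
by rewrite mem_filter => /andP[/= /negbTE -> ->].
Qed.

Hypothesis X_uniq : uniq X.

Lemma match_pred_inj : {in X &, injective match_pred}.
Proof.
move=> x y xX yX eq_xy.
have pxy : p x = p y by rewrite -(match_predP xX).2 -(match_predP yX).2 eq_xy.
move: eq_xy; rewrite /match_pred -pxy; case px: (p x).
  by apply: transfer_inj; rewrite ?size_filter ?filter_uniq ?mem_filter -?pxy ?px.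
by apply: transfer_inj; rewrite ?size_filter -?count_predC_eq ?filter_uniq
                                ?mem_filter /= -?pxy ?px.
Qed.

Lemma match_pred_onto y : y \in X -> exists2 x, x \in X & match_pred x = y.
Proof.
move=> yX; rewrite /match_pred; case qy: (q y).
  have [|||x] := @transfer_onto _ x0 (filter p X) (filter q X) _ _ y;
    rewrite ?size_filter ?filter_uniq ?mem_filter ?qy //.
  by case/andP=> px xX <-; exists x; rewrite ?px.
have [|||x] := @transfer_onto _ x0 (filter (predC p) X) (filter (predC q) X) _ _ y;
  rewrite ?size_filter ?count_predC_eq ?filter_uniq ?mem_filter /= ?qy //.
by case/andP=> /negbTE px xX <-; exists x; rewrite ?px.
Qed.
End MatchPred.

Section Truncation.
Variable m : nat.

Definition trunc x := minn x m.
Definition large x := m <= x.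

Fixpoint fill (r h : seq nat) : seq nat :=
  if r is x :: r' then
    if x == m then
      if h is y :: h' then y :: fill r' h' else x :: fill r' [::]
    else x :: fill r' h
  else [::].

Lemma fill_trunc w : fill (map trunc w) (filter large w) = w.
Proof.
elim: w => //= x w IH; rewrite /trunc /large in IH *.
case: (leqP m x) => [_ | lt_xm]; first by rewrite eqxx IH.
by rewrite (ltn_eqF lt_xm) IH.
Qed.

Lemma fillK r h : all (fun x => x <= m) r -> all large h -> size h = count_mem m r ->
  map trunc (fill r h) = r /\ filter large (fill r h) = h.
Proof.
elim: r h => [|x r IH] h /=; first by case: h.
move=> /andP[le_xm le_rm] large_h; case: eqP => [-> | /eqP ne_xm] size_h /=.
  case: h large_h size_h => //= y h /andP[large_y large_h] [size_h].
  have [-> ->] := IH h le_rm large_h size_h.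
  by rewrite large_y /trunc (minn_idPr large_y).
have lt_xm : x < m by rewrite ltn_neqAle ne_xm.
have [-> ->] := IH h le_rm large_h size_h.
by rewrite /large leqNgt lt_xm /trunc (minn_idPl le_xm).
Qed.

Lemma perm_trunc_large w s : perm_eq (map trunc w) (map trunc s) ->
  perm_eq (filter large w) (filter large s) -> perm_eq w s.
Proof.
move=> /permP perm_trunc /permP perm_large; apply/allP => a _ /=.
case: (leqP m a) => [le_ma | lt_am].
  have count_large t : count (predI (pred1 a) large) t = count_mem a t.
    by apply: eq_count => y /=; case: eqP => // ->.
  by have := perm_large (pred1 a); rewrite !count_filter !count_large => ->.
have count_trunc t : count (preim trunc (pred1 a)) t = count_mem a t.
  apply: eq_count => y /=; rewrite /trunc.
  case: (leqP m y) => // le_my.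
  by rewrite (gtn_eqF lt_am) (gtn_eqF (leq_trans lt_am le_my)).
by have := perm_trunc (pred1 a); rewrite !count_map !count_trunc => ->.
Qed.

Section Rearrangements.
Variable s : seq nat.

Lemma fillP r h : perm_eq r (map trunc s) -> perm_eq h (filter large s) ->
  map trunc (fill r h) = r /\ filter large (fill r h) = h.
Proof.
move=> perm_r perm_h; apply: fillK.
- by rewrite (perm_all _ perm_r) all_map; apply/allP => x _; exact: geq_minr.
- by rewrite (perm_all _ perm_h) filter_all.
rewrite (perm_size perm_h) (permP perm_r) size_filter count_map.
by apply: eq_count => y /=; rewrite /trunc /large; case: leqP => [_ | /ltn_eqF ->]; rewrite ?eqxx.
Qed.

Lemma perm_permutations_fill :
  perm_eq [seq fill r h | r <- permutations (map trunc s), h <- permutations (filter large s)]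
          (permutations s).
Proof.
apply: uniq_perm; rewrite ?permutations_uniq //.
  apply: allpairs_uniq; rewrite ?permutations_uniq //.
  move=> [r1 h1] [r2 h2] /allpairsP[[a b] [/= + + [-> ->]]] /allpairsP[[c d] [/= + + [-> ->]]].
  rewrite !mem_permutations => ra hb rc hd /= eq_fill.
  have [tr_a lg_b] := fillP ra hb; have [tr_c lg_d] := fillP rc hd.
  by congr (_, _); [rewrite -tr_a -tr_c | rewrite -lg_b -lg_d]; rewrite eq_fill.
move=> z; rewrite mem_permutations; apply/allpairsP/idP.
  case=> -[r h] [/=]; rewrite !mem_permutations => perm_r perm_h ->.
  have [tr_fill lg_fill] := fillP perm_r perm_h.
  by apply: perm_trunc_large; rewrite ?tr_fill ?lg_fill.
move=> perm_z; exists (map trunc z, filter large z).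
by rewrite !mem_permutations perm_map ?perm_filter ?fill_trunc.
Qed.

Lemma count_permutations_trunc (P : pred (seq nat)) : (forall w, P (map trunc w) = P w) ->
  count P (permutations s) =
  count P (permutations (map trunc s)) * size (permutations (filter large s)).
Proof.
move=> P_trunc; rewrite -(permP perm_permutations_fill).
have : all (fun r => perm_eq r (map trunc s)) (permutations (map trunc s)).
  by apply/allP => r; rewrite mem_permutations.
elim: (permutations (map trunc s)) => [|r rs IH] //= /andP[perm_r perm_rs].
rewrite count_cat IH // count_map mulnDl; congr (_ + _).
rewrite (@eq_in_count _ _ (fun _ => P r)); last first.
  by move=> h; rewrite mem_permutations => perm_h /=; rewrite -P_trunc (fillP perm_r perm_h).1.
by case: (P r); [rewrite mul1n; exact: count_predT | exact: count_pred0].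
Qed.
End Rearrangements.
End Truncation.

Lemma gfo_trunc m u w : mword m u -> gfo u (map (trunc m) w) = gfo u w.
Proof.
have nth_trunc k : nth 0 (map (trunc m) w) k = trunc m (nth 0 w k).
  by elim: w k => [|x w IH] [|k] //=; rewrite /trunc min0n.
move=> /all_nthP mword_u; rewrite /gfo size_map; congr (_ && _).
apply: eq_has => i /=; apply: eq_in_all => j; rewrite mem_iota add0n => /andP[_ lt_j].
have /andP[_ le_um] := mword_u 0 j lt_j.
by rewrite nth_trunc /trunc leq_min le_um andbT.
Qed.

Lemma mwilf_count_permutations m u v : 0 < m -> mword m u -> mword m v -> mwilf m u v ->
  forall s, posword s -> count (gfo u) (permutations s) = count (gfo v) (permutations s).
Proof.
move=> m_gt0 mword_u mword_v wilf_uv s pos_s.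
rewrite (count_permutations_trunc _ (fun w => gfo_trunc w mword_u)).
rewrite (count_permutations_trunc _ (fun w => gfo_trunc w mword_v)).
congr (_ * _); apply: wilf_uv; rewrite /mword all_map.
by apply/allP => x xs /=; rewrite /trunc geq_minr andbT leq_min m_gt0 (allP pos_s x xs).
Qed.

Lemma perm_map_inj_in (T : eqType) (f : T -> T) (s : seq T) :
  uniq s -> {in s &, injective f} -> {subset map f s <= s} -> perm_eq (map f s) s.
Proof.
move=> s_uniq f_inj f_sub; have fs_uniq : uniq (map f s) by rewrite map_inj_in_uniq.
apply: uniq_perm => //.
exact: (uniq_min_size fs_uniq f_sub (eq_leq (esym (size_map f s)))).2.
Qed.

Definition rclass (w : seq nat) := permutations (sort leq w).

Lemma mem_rclass w1 w2 : (w1 \in rclass w2) = perm_eq w1 w2.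
Proof. by rewrite mem_permutations (perm_sym w1) perm_sort perm_sym. Qed.

Lemma rclass_self w : w \in rclass w.
Proof. by rewrite mem_rclass. Qed.

Lemma rclass_perm w1 w2 : perm_eq w1 w2 -> rclass w1 = rclass w2.
Proof. by rewrite /rclass => /(perm_sortP leq_total leq_trans anti_leq) ->. Qed.

Lemma posword_perm w1 w2 : perm_eq w1 w2 -> posword w1 = posword w2.
Proof. exact: perm_all. Qed.

Section ClassMatch.
Variables u v : seq nat.

(* One matching per rearrangement class: [rclass w] only depends on the class of [w]. *)
Definition class_match w := match_pred [::] (rclass w) (gfo u) (gfo v) w.

Hypothesis count_uv : forall s, posword s ->
  count (gfo u) (permutations s) = count (gfo v) (permutations s).

Lemma count_rclass w : posword w -> count (gfo u) (rclass w) = count (gfo v) (rclass w).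
Proof. by move=> pos_w; rewrite count_uv // (posword_perm (permEl (perm_sort leq w))). Qed.

Lemma class_matchP w : posword w ->
  perm_eq (class_match w) w /\ gfo v (class_match w) = gfo u w.
Proof.
move=> pos_w.
by have [+ ->] := match_predP [::] (count_rclass pos_w) (rclass_self w); rewrite mem_rclass.
Qed.

Lemma class_match_rearrangement : rearrangement_map u v class_match.
Proof.
have perm_match w : posword w -> perm_eq (class_match w) w by move/class_matchP=> [].
split; [|split; [|split; [|split; [|split]]]].
- by move=> w pos_w; rewrite (posword_perm (perm_match w pos_w)).
- move=> w1 w2 pos_w1 pos_w2 eq_match.
  have perm12 : perm_eq w1 w2 by rewrite -(permPl (perm_match w1 pos_w1)) eq_match perm_match.
  move: eq_match; rewrite /class_match (rclass_perm perm12).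
  by apply: match_pred_inj; rewrite ?count_rclass ?permutations_uniq ?mem_rclass.
- move=> w pos_w.
  have [x + <-] := match_pred_onto [::] (count_rclass pos_w) (permutations_uniq _) (rclass_self w).
  rewrite mem_rclass => perm_xw; exists x; first by rewrite (posword_perm perm_xw).
  by rewrite /class_match (rclass_perm perm_xw).
- move=> w pos_w; have perm_w := perm_match w pos_w.
  by rewrite /wt (perm_size perm_w) (perm_sumn perm_w).
- exact: perm_match.
- by move=> w /class_matchP[_ ->].
Qed.
End ClassMatch.

Lemma rearrangement_map_count u v f : rearrangement_map u v f ->
  forall s, posword s -> count (gfo u) (permutations s) = count (gfo v) (permutations s).
Proof.
move=> [_ [f_inj [_ [_ [f_perm f_gfo]]]]] s pos_s.
have pos_class w : w \in permutations s -> posword w.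
  by rewrite mem_permutations => /posword_perm ->.
have f_class : perm_eq (map f (permutations s)) (permutations s).
  apply: perm_map_inj_in; rewrite ?permutations_uniq //.
    by move=> w1 w2 /pos_class pos_w1 /pos_class pos_w2; apply: f_inj.
  move=> _ /mapP[w w_class ->]; rewrite mem_permutations.
  by rewrite (permPl (f_perm w (pos_class w w_class))) -mem_permutations.
rewrite -[RHS](permP f_class) count_map.
by apply: eq_in_count => w /pos_class /f_gfo [? ?]; apply/idP/idP.
Qed.

Theorem theorem8 (m : nat) (u v : seq nat) :
  0 < m -> mword m u -> mword m v ->
  (mwilf m u v <-> exists f : seq nat -> seq nat, rearrangement_map u v f).
Proof.
move=> m_gt0 mword_u mword_v; split=> [wilf_uv | [f f_map] w mword_w].
  exists (class_match u v); apply: class_match_rearrangement.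
  exact: mwilf_count_permutations wilf_uv.
apply: (rearrangement_map_count f_map).
by apply: sub_all mword_w => x /andP[].
Qed.
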